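(* Let $X$ be a rational ruled surface, let $c_1=a(\sigma+f)$ with $a\in\{0,1\}$, and let $c_2$ be an integer with $3c_2-c_1^2>0$. Let $F$ be a divisor on $X$ and $\zeta=3F-c_1$, and suppose there exist ample divisors $L_1,L_2$ with $\zeta\cdot L_1<0<\zeta\cdot L_2$ and that $-4(3c_2-c_1^2)\le\zeta^2<0$. Define $$d_\zeta(c_1,c_2)=-\frac{3c_2-c_1^2}{3}+2+\frac{\zeta^2}{6}+\frac{K_X\cdot\zeta}{2}.$$ Then: (i) if $a=0$, then $d_\zeta(c_1,c_2)<0$; (ii) if $a=1$, then $d_\zeta(c_1,c_2)\le 0$, with equality if and only if either $\zeta\equiv 2\sigma-(3c_2-2)f$, or $e=0$ and $\zeta\equiv-(3c_2-2)\sigma+2f$.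
   Context: $X$ is a rational ruled surface with ruling $\pi:X\to\mathbb{P}^1$; $f$ is a fiber of $\pi$ and $\sigma$ is a section of $\pi$ with $\sigma^2$ minimal; $e=-\sigma^2\ge 0$. The Picard group of $X$ is generated by $\sigma$ and $f$, with $\sigma^2=-e$, $\sigma\cdot f=1$, $f^2=0$, and the canonical divisor is $K_X=-2\sigma-(2+e)f$. $\equiv$ denotes numerical equivalence. *)

From mathcomp Require Import all_boot all_order all_algebra.
Set Implicit Arguments. Unset Strict Implicit. Unset Printing Implicit Defensive.
Import Order.TTheory GRing.Theory Num.Theory.
Local Open Scope ring_scope.

(* The rational ruled surface X = F_e (e >= 0).  Its Picard group, which
   equals its Neron-Severi group (numerical equivalence = linear equivalence),
   is Z sigma + Z f.  A divisor class is represented by its coordinates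
   (x, y) meaning  x*sigma + y*f.  Numerical equivalence is equality of
   coordinates. *)
Definition divisor := (int * int)%type.

Definition Dsigma : divisor := (1, 0).
Definition Dfib : divisor := (0, 1).
Definition Dadd (D1 D2 : divisor) : divisor := (D1.1 + D2.1, D1.2 + D2.2).
Definition Dscale (n : int) (D : divisor) : divisor := (n * D.1, n * D.2).
Definition Dsub (D1 D2 : divisor) : divisor := Dadd D1 (Dscale (-1) D2).

(* intersection form: sigma^2 = -e, sigma.f = 1, f^2 = 0 *)
Definition intersect (e : nat) (D1 D2 : divisor) : int :=
  - (e%:Z) * (D1.1 * D2.1) + D1.1 * D2.2 + D1.2 * D2.1.

Definition KX (e : nat) : divisor := (-2, - (2 + e%:Z)).

(* ampleness on F_e (Hartshorne V.2.18 / V.2.20): x sigma + y f is ample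
   iff x > 0 and y > e x. *)
Definition ample (e : nat) (D : divisor) : Prop := 0 < D.1 /\ e%:Z * D.1 < D.2.

Definition c1_of (a : nat) : divisor := Dscale a%:Z (Dadd Dsigma Dfib).

Definition d_zeta (e : nat) (c1 : divisor) (c2 : int) (zeta : divisor) : rat :=
  - ((3 * c2 - intersect e c1 c1)%:~R) / 3 + 2
  + (intersect e zeta zeta)%:~R / 6 + (intersect e (KX e) zeta)%:~R / 2.

From mathcomp Require Import all_boot all_order all_algebra zify ring.
Set Implicit Arguments. Unset Strict Implicit. Unset Printing Implicit Defensive.
Import Order.TTheory GRing.Theory Num.Theory.
Local Open Scope ring_scope.

(* Write zeta = x sigma + y f.  As x sigma + y f is ample iff 0 < x and e x < y,
   zeta.L1 < 0 < zeta.L2 forces x and y to have strictly opposite signs.  Using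
   K_X^2 = 8 and zeta^2 >= -4(3c2 - c1^2) one gets
   12 d_zeta <= 3 (zeta + K_X)^2 = 3 (x - 2)(2(y - 2) - e x),
   which is <= 0 for opposite signs unless x = 1 or y = 1, and vanishes only
   when x = 2, or e = 0 and y = 2.  As zeta = -c1 mod 3, neither coordinate is
   1, and for a = 0 neither is 2; in the equality case zeta^2 = -4(3c2 - c1^2)
   then determines the other coordinate. *)

Lemma intersect_ampleE (e : nat) (z L : divisor) :
  intersect e z L = z.1 * (L.2 - e%:Z * L.1) + z.2 * L.1.
Proof. rewrite /intersect; ring. Qed.

Lemma intersect_addK_selfE (e : nat) (z : divisor) :
  intersect e (Dadd z (KX e)) (Dadd z (KX e)) =
  (z.1 - 2) * (2 * (z.2 - 2) - e%:Z * z.1).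
Proof. rewrite /intersect /Dadd /KX /=; ring. Qed.

Lemma ample_separation_signs (e : nat) (z L1 L2 : divisor) :
  ample e L1 -> ample e L2 -> intersect e z L1 < 0 -> 0 < intersect e z L2 ->
  (0 < z.1 /\ z.2 < 0) \/ (z.1 < 0 /\ 0 < z.2).
Proof.
rewrite /ample !intersect_ampleE => -[p1_gt0 q1_gt] [p2_gt0 q2_gt].
have : 0 < L1.2 - e%:Z * L1.1 by rewrite subr_gt0.
have : 0 < L2.2 - e%:Z * L2.1 by rewrite subr_gt0.
move: (L1.2 - e%:Z * L1.1) (L2.2 - e%:Z * L2.1) => r1 r2.
nia.
Qed.

Section AdjointSelfIntersection.

Variables (e : nat) (z : divisor).
Hypothesis z_signs : (0 < z.1 /\ z.2 < 0) \/ (z.1 < 0 /\ 0 < z.2).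
Hypotheses (z1_neq1 : z.1 != 1) (z2_neq1 : z.2 != 1).

Lemma intersect_addK_self_le0 :
  intersect e (Dadd z (KX e)) (Dadd z (KX e)) <= 0.
Proof. rewrite intersect_addK_selfE; nia. Qed.

Lemma intersect_addK_self_eq0 :
  intersect e (Dadd z (KX e)) (Dadd z (KX e)) = 0 <->
  z.1 = 2 \/ (e = 0%N /\ z.2 = 2).
Proof.
rewrite intersect_addK_selfE; split=> [/eqP|]; last first.
  by case=> [-> | [-> ->]]; ring.
rewrite mulf_eq0 subr_eq0 => /orP[/eqP -> | /eqP z_eq]; first by left.
right; case: z_signs => -[z1_sgn z2_sgn]; nia.
Qed.

Lemma intersect_addK_self_lt0 : z.1 != 2 -> z.2 != 2 ->
  intersect e (Dadd z (KX e)) (Dadd z (KX e)) < 0.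
Proof.
move=> z1_neq2 z2_neq2; rewrite lt_neqAle intersect_addK_self_le0 andbT.
by apply/eqP => /intersect_addK_self_eq0; lia.
Qed.

End AdjointSelfIntersection.

Definition d_zeta_num (e : nat) (N : int) (z : divisor) : int :=
  - 2 * N + 12 + intersect e z z + 3 * intersect e (KX e) z.

Lemma d_zetaE (e : nat) (c1 : divisor) (c2 : int) (z : divisor) :
  d_zeta e c1 c2 z = (d_zeta_num e (3 * c2 - intersect e c1 c1) z)%:~R / 6.
Proof. rewrite /d_zeta /d_zeta_num !(intrD, intrM, intrN); by field. Qed.

Lemma d_zeta_eq0 (e : nat) (c1 : divisor) (c2 : int) (z : divisor) :
  d_zeta e c1 c2 z = 0 <-> d_zeta_num e (3 * c2 - intersect e c1 c1) z = 0.
Proof.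
rewrite d_zetaE; split=> [/eqP|->]; last by rewrite mul0r.
by rewrite mulf_eq0 invr_eq0 orbF intr_eq0 => /eqP.
Qed.

(* Since K_X^2 = 8, 3 (zeta + K_X)^2 = 3 zeta^2 + 6 K_X.zeta + 24. *)
Lemma d_zeta_num_adjointE (e : nat) (N : int) (z : divisor) :
  2 * d_zeta_num e N z =
  3 * intersect e (Dadd z (KX e)) (Dadd z (KX e)) - (intersect e z z + 4 * N).
Proof. rewrite /d_zeta_num /intersect /Dadd /KX /=; ring. Qed.

Section DZetaNumSign.

Variables (e : nat) (N : int) (z : divisor).
Hypothesis z_signs : (0 < z.1 /\ z.2 < 0) \/ (z.1 < 0 /\ 0 < z.2).
Hypothesis z_self_ge : - 4 * N <= intersect e z z.
Hypotheses (z1_neq1 : z.1 != 1) (z2_neq1 : z.2 != 1).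

Lemma d_zeta_num_le0 : d_zeta_num e N z <= 0.
Proof.
have := d_zeta_num_adjointE e N z.
have := intersect_addK_self_le0 e z_signs z1_neq1 z2_neq1; lia.
Qed.

Lemma d_zeta_num_lt0 : z.1 != 2 -> z.2 != 2 -> d_zeta_num e N z < 0.
Proof.
move=> z1_neq2 z2_neq2; have := d_zeta_num_adjointE e N z.
have := intersect_addK_self_lt0 e z_signs z1_neq1 z2_neq1 z1_neq2 z2_neq2; lia.
Qed.

Lemma d_zeta_num_eq0 :
  d_zeta_num e N z = 0 <->
  (z.1 = 2 \/ (e = 0%N /\ z.2 = 2)) /\ intersect e z z = - 4 * N.
Proof.
rewrite -(intersect_addK_self_eq0 e z_signs z1_neq1 z2_neq1).
have := d_zeta_num_adjointE e N z.
have := intersect_addK_self_le0 e z_signs z1_neq1 z2_neq1; lia.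
Qed.

End DZetaNumSign.

Lemma extremal_self_intersectionP (e : nat) (M : int) (z : divisor) :
  (z.1 = 2 \/ (e = 0%N /\ z.2 = 2)) /\ intersect e z z = - 4 * (M + e%:Z) <->
  z = (2, - M) \/ (e = 0%N /\ z = (- M, 2)).
Proof.
case: z => x y; rewrite /intersect /=; split.
- case=> -[-> | [-> ->]] self_eq; [left | right; split=> //];
    congr (_, _); lia.
- by case=> [[-> ->] | [-> [-> ->]]]; split; [left | ring | right | ring].
Qed.

Lemma zeta_coords (a : nat) (F : divisor) :
  Dsub (Dscale 3 F) (c1_of a) = (3 * F.1 - a%:Z, 3 * F.2 - a%:Z).
Proof.
by rewrite /Dsub /Dadd /Dscale /c1_of /Dsigma /Dfib /=; congr (_, _); ring.
Qed.

Theorem lemma2p6 (e : nat) (a : nat) (c2 : int) (F : divisor) :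
  (a <= 1)%N ->
  0 < 3 * c2 - intersect e (c1_of a) (c1_of a) ->
  let zeta := Dsub (Dscale 3 F) (c1_of a) in
  (exists L1 L2 : divisor, ample e L1 /\ ample e L2 /\
     intersect e zeta L1 < 0 /\ 0 < intersect e zeta L2) ->
  - 4 * (3 * c2 - intersect e (c1_of a) (c1_of a)) <= intersect e zeta zeta ->
  intersect e zeta zeta < 0 ->
  (a = 0%N -> d_zeta e (c1_of a) c2 zeta < 0) /\
  (a = 1%N ->
     d_zeta e (c1_of a) c2 zeta <= 0 /\
     (d_zeta e (c1_of a) c2 zeta = 0 <->
        (zeta = (2, - (3 * c2 - 2)) \/
         (e = 0%N /\ zeta = (- (3 * c2 - 2), 2))))).
Proof.
move=> a_le1 _ zeta [L1 [L2 [L1_ample [L2_ample [zL1_lt0 zL2_gt0]]]]] zeta_self_ge _.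
have z_signs := ample_separation_signs L1_ample L2_ample zL1_lt0 zL2_gt0.
have zetaE : zeta = (3 * F.1 - a%:Z, 3 * F.2 - a%:Z) by exact: zeta_coords.
split=> a_eq; subst a.
  rewrite d_zetaE pmulr_llt0 // ltrz0.
  by apply: d_zeta_num_lt0 => //; rewrite zetaE /=; lia.
have [z1_neq1 z2_neq1] : zeta.1 != 1 /\ zeta.2 != 1 by rewrite zetaE /=; lia.
split; first by rewrite d_zetaE pmulr_lle0 // lerz0; exact: d_zeta_num_le0.
apply: iff_trans (d_zeta_eq0 _ _ _ _) _.
have N_eq : 3 * c2 - intersect e (c1_of 1) (c1_of 1) = (3 * c2 - 2) + e%:Z.
  by rewrite /intersect /c1_of /Dscale /Dadd /=; ring.
rewrite N_eq in zeta_self_ge *.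
apply: iff_trans (d_zeta_num_eq0 z_signs zeta_self_ge z1_neq1 z2_neq1) _.
exact: extremal_self_intersectionP.
Qed.
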